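(* Let $V$ be a real vector space of dimension $n+2$ with a nondegenerate symmetric bilinear form $g_{AB}$ (used to raise and lower indices), let $\phi$ be the linear map on the space of algebraic curvature tensors on $V$ sending $R_{ABCD}$ to its trace-free part $\mathring R_{ABCD}$, and let $I^A\in V$ satisfy $\iota:=I_AI^A\neq0$. Let $I^\perp$ be the space of algebraic curvature tensors with $I^AR_{ABCD}=0$. Then $\ker(\phi)\cap I^\perp$ is spanned by $\big(g\wedge(g-\tfrac2\iota I^2)\big)_{ABCD}$, where $(I^2)_{AB}=I_AI_B$.
   Context: An algebraic curvature tensor on $V$ is $R_{ABCD}$ with $R_{ABCD}=-R_{BACD}=-R_{ABDC}$ and $R_{[ABC]D}=0$. For symmetric $Q_{AB},P_{AB}$: $(Q\wedge P)_{ABCD}=Q_{AC}P_{BD}-Q_{BC}P_{AD}+Q_{BD}P_{AC}-Q_{AD}P_{BC}$. The trace-free part of $R_{ABCD}$ is $\mathring R_{ABCD}=R_{ABCD}-(g\wedge P)_{ABCD}$ where $P_{AC}=\frac1n(R_{ABC}{}^B-\mathsf Jg_{AC})$ and $\mathsf J=P_A{}^A=\frac1{2(n+1)}R_{AB}{}^{AB}$. *)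

From mathcomp Require Import all_boot all_order all_algebra.
Set Implicit Arguments. Unset Strict Implicit. Unset Printing Implicit Defensive.
Import Order.TTheory GRing.Theory Num.Theory.
Local Open Scope ring_scope.

Section Defs.
Variable R : fieldType.
Variable N : nat.

(* covariant 4-tensors T_{ABCD} on V (components w.r.t. the standard basis) *)
Definition tensor4 := 'I_N -> 'I_N -> 'I_N -> 'I_N -> R.

Definition is_alg_curv (T : tensor4) : Prop :=
  (forall A B C D, T A B C D = - T B A C D) /\
  (forall A B C D, T A B C D = - T A B D C) /\
  (forall A B C D, T A B C D + T B C A D + T C A B D = 0).

Definition wedge (Q P : 'M[R]_N) : tensor4 :=
  fun A B C D => Q A C * P B D - Q B C * P A D + Q B D * P A C - Q A D * P B C.

Variable g : 'M[R]_N.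
Definition ginv : 'M[R]_N := invmx g.

Definition ricci (T : tensor4) : 'M[R]_N :=
  \matrix_(A, C) \sum_(B < N) \sum_(D < N) ginv B D * T A B C D.

Definition scal (T : tensor4) : R :=
  \sum_(A < N) \sum_(B < N) \sum_(C < N) \sum_(D < N)
     ginv A C * ginv B D * T A B C D.

End Defs.

Section Dims.
Variable R : fieldType.
Variable n : nat.
Variable g : 'M[R]_(n.+2).

Definition Jtr (T : tensor4 R n.+2) : R := (2 * (n.+1)%:R)^-1 * scal g T.

Definition schouten (T : tensor4 R n.+2) : 'M[R]_(n.+2) :=
  (n%:R)^-1 *: (ricci g T - Jtr T *: g).

Definition tracefree (T : tensor4 R n.+2) : tensor4 R n.+2 :=
  fun A B C D => T A B C D - wedge g (schouten T) A B C D.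
End Dims.

From mathcomp Require Import all_boot all_order all_algebra.
From mathcomp Require Import ring.
From Stdlib Require Import FunctionalExtensionality.
Set Implicit Arguments. Unset Strict Implicit. Unset Printing Implicit Defensive.
Import Order.TTheory GRing.Theory Num.Theory.
Local Open Scope ring_scope.

(* If phi(R) = 0 then R = g /\ P with P the Schouten tensor of R; conversely, for
   n > 0 every g /\ Q with Q symmetric is trace-free with Schouten tensor Q.  So one
   must find the symmetric Q for which I^A (g /\ Q)_{ABCD} vanishes.  Tracing this
   contraction over B, C gives n I^A Q_{AD} + tr(Q) I_D = 0, so I^A Q_{AD} = k I_D;
   contracting it with I^C then gives iota Q = k (2 I^2 - iota g).  Conversely
   g - (2/iota) I^2 satisfies I^A Q_{AD} = - I_D, which makes the contraction vanish. *)

Lemma tensor4_ext (R : fieldType) N (T1 T2 : tensor4 R N) :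
  (forall A B C D, T1 A B C D = T2 A B C D) -> T1 = T2.
Proof. by move=> e; do 4!apply: functional_extensionality => ?; apply: e. Qed.

Lemma sym_mxE (R : Type) m (Q : 'M[R]_m) : Q^T = Q -> forall i j, Q i j = Q j i.
Proof. by move=> hQ i j; rewrite -{1}hQ mxE. Qed.

Lemma sum_delta (R : nzRingType) (I : finType) (i : I) (F : I -> R) :
  \sum_j (i == j)%:R * F j = F i.
Proof.
rewrite (bigD1 i) //= eqxx mul1r big1 ?addr0 // => j /negbTE.
by rewrite eq_sym => ->; rewrite mul0r.
Qed.

Lemma wedge_alg_curv (R : fieldType) N (Q P : 'M[R]_N) :
  Q^T = Q -> P^T = P -> is_alg_curv (wedge Q P).
Proof.
move=> /sym_mxE Qs /sym_mxE Ps; split; [|split] => A B C D; rewrite /wedge; try ring.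
by rewrite (Qs B A) (Qs C A) (Qs C B) (Ps B A) (Ps C A) (Ps C B); ring.
Qed.

Lemma wedgeZr (R : fieldType) N (Q P : 'M[R]_N) c A B C D :
  wedge Q (c *: P) A B C D = c * wedge Q P A B C D.
Proof. by rewrite /wedge !mxE; ring. Qed.

(* Sum of the Bianchi identities at [ABCD] and [BCDA] minus those at [CDAB] and [DABC]. *)
Lemma alg_curv_pair_sym (R : fieldType) N (T : tensor4 R N) :
  2 != 0 :> R -> is_alg_curv T -> forall A B C D, T A B C D = T C D A B.
Proof.
move=> two_neq0 [asym12 [asym34 bianchi]] A B C D.
have := bianchi A B C D; have := bianchi B C D A.
have := bianchi C D A B; have := bianchi D A B C.
rewrite (asym34 B C D A) (asym34 C D B A) (asym12 D B C A) (asym34 B D C A) opprK.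
rewrite (asym12 A C D B) (asym34 C A D B) opprK (asym34 D A B C) (asym34 A B D C).
move=> b4 b3 b2 b1; apply: (mulIf two_neq0); apply/eqP; rewrite -subr_eq0 -mulrBl.
have := congr2 (fun x y => x - y) (congr2 +%R b1 b2) (congr2 +%R b3 b4).
by rewrite !addr0 subrr => <-; apply/eqP; ring.
Qed.

Section IndexCalculus.
Variables (R : fieldType) (n : nat) (g : 'M[R]_n.+2).
Hypotheses (gsym : g^T = g) (g_unit : g \in unitmx).

Definition gtrace (Q : 'M[R]_n.+2) := \sum_B \sum_D ginv g B D * Q B D.
Definition lower (v : 'I_n.+2 -> R) A := \sum_B g A B * v B.
Definition contr (v : 'I_n.+2 -> R) (Q : 'M[R]_n.+2) D := \sum_A v A * Q A D.
Definition gdot (v w : 'I_n.+2 -> R) := \sum_A v A * lower w A.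
Definition lower_sq (v : 'I_n.+2 -> R) : 'M[R]_n.+2 := \matrix_(A, B) (lower v A * lower v B).
(* g_{AB} - (2/iota) v_A v_B: the metric composed with the reflection across v^perp. *)
Definition reflection_form (v : 'I_n.+2 -> R) := g - (2 / gdot v v) *: lower_sq v.

Let g_sym := sym_mxE gsym.

Lemma ginv_sym i j : ginv g i j = ginv g j i.
Proof. by rewrite /ginv -{1}gsym -trmx_inv mxE. Qed.

Lemma mul_g_ginv i j : \sum_k g i k * ginv g k j = (i == j)%:R.
Proof. by have := congr1 (fun M : 'M_n.+2 => M i j) (mulmxV g_unit); rewrite !mxE. Qed.

Lemma mul_ginv_g i j : \sum_k ginv g i k * g k j = (i == j)%:R.
Proof. by have := congr1 (fun M : 'M_n.+2 => M i j) (mulVmx g_unit); rewrite !mxE. Qed.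

Lemma sum_ginv_g (F : 'I_n.+2 -> R) C :
  \sum_B \sum_D ginv g B D * g B C * F D = F C.
Proof.
rewrite exchange_big /= -(sum_delta C F); apply: eq_bigr => D _.
by rewrite -mul_g_ginv mulr_suml; apply: eq_bigr => B _; rewrite (g_sym B C); ring.
Qed.

Lemma gtrace_g : gtrace g = n.+2%:R.
Proof.
rewrite /gtrace (eq_bigr (fun _ => 1)) ?sumr_const ?card_ord // => B _.
transitivity ((B == B)%:R : R); last by rewrite eqxx.
by rewrite -mul_ginv_g; apply: eq_bigr => D _; rewrite (g_sym B D).
Qed.

Lemma contr_g v D : contr v g D = lower v D.
Proof. by apply: eq_bigr => A _; rewrite g_sym mulrC. Qed.

Lemma contr_addZ v a b P Q D :
  contr v (a *: P + b *: Q) D = a * contr v P D + b * contr v Q D.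
Proof.
rewrite /contr !mulr_sumr -big_split /=; apply: eq_bigr => A _; rewrite !mxE; ring.
Qed.

Lemma ricci_wedge Q : Q^T = Q -> ricci g (wedge g Q) = n%:R *: Q + gtrace Q *: g.
Proof.
move=> /sym_mxE Q_sym; apply/matrixP => A C; rewrite !mxE.
under eq_bigr do under eq_bigr do rewrite /wedge mulrBr mulrDr mulrBr.
under eq_bigr do rewrite sumrB big_split sumrB /=.
rewrite sumrB big_split sumrB /=.
have e1 : \sum_B \sum_D ginv g B D * (g A C * Q B D) = gtrace Q * g A C.
  rewrite /gtrace mulr_suml; apply: eq_bigr => B _.
  by rewrite mulr_suml; apply: eq_bigr => D _; ring.
have e2 : \sum_B \sum_D ginv g B D * (g B C * Q A D) = Q A C.
  by rewrite -(sum_ginv_g (Q A)); apply: eq_bigr => B _; apply: eq_bigr => D _; ring.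
have e3 : \sum_B \sum_D ginv g B D * (g B D * Q A C) = n.+2%:R * Q A C.
  rewrite -gtrace_g /gtrace mulr_suml; apply: eq_bigr => B _.
  by rewrite mulr_suml; apply: eq_bigr => D _; ring.
have e4 : \sum_B \sum_D ginv g B D * (g A D * Q B C) = Q A C.
  rewrite exchange_big -(sum_ginv_g (Q^~ C)); apply: eq_bigr => D _; apply: eq_bigr => B _.
  by rewrite ginv_sym g_sym; ring.
have n2E : n.+2%:R = n%:R + 2 :> R by rewrite -addn2 natrD.
by rewrite e1 e2 e3 e4 n2E; ring.
Qed.

Lemma gtrace_addZ a b P Q : gtrace (a *: P + b *: Q) = a * gtrace P + b * gtrace Q.
Proof.
rewrite /gtrace !mulr_sumr -big_split /=; apply: eq_bigr => B _.
by rewrite !mulr_sumr -big_split /=; apply: eq_bigr => D _; rewrite !mxE; ring.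
Qed.

Lemma scal_ricci T : scal g T = gtrace (ricci g T).
Proof.
apply: eq_bigr => A _; rewrite exchange_big /=; apply: eq_bigr => C _.
rewrite mxE mulr_sumr; apply: eq_bigr => B _; rewrite mulr_sumr; apply: eq_bigr => D _; ring.
Qed.

Lemma scal_wedge Q : Q^T = Q -> scal g (wedge g Q) = 2 * n.+1%:R * gtrace Q.
Proof.
move=> Q_sym; rewrite scal_ricci ricci_wedge // gtrace_addZ gtrace_g.
by rewrite -addn2 -addn1 !natrD; ring.
Qed.

Lemma contr_wedge v Q B C D :
  \sum_A v A * wedge g Q A B C D =
  lower v C * Q B D - g B C * contr v Q D + g B D * contr v Q C - lower v D * Q B C.
Proof.
under eq_bigr do rewrite /wedge mulrBr mulrDr mulrBr.
rewrite sumrB big_split sumrB /= /lower /contr !mulr_sumr !mulr_suml.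
by congr (_ - _ + _ - _); apply: eq_bigr => A _; rewrite ?(g_sym A); ring.
Qed.

Lemma sum_ginv_contr v T : (forall A B C D, T A B C D = - T A B D C) -> forall D,
  \sum_B \sum_C ginv g B C * \sum_A v A * T A B C D = - contr v (ricci g T) D.
Proof.
move=> asym34 D; under eq_bigr do under eq_bigr do rewrite mulr_sumr.
under eq_bigr do rewrite exchange_big /=.
rewrite exchange_big /= /contr -sumrN; apply: eq_bigr => A _.
rewrite mxE mulr_sumr -sumrN; apply: eq_bigr => B _.
by rewrite mulr_sumr -sumrN; apply: eq_bigr => C _; rewrite (asym34 A B C D); ring.
Qed.

Lemma contr_contr_wedge v Q : Q^T = Q -> forall B D,
  \sum_C v C * \sum_A v A * wedge g Q A B C D =
  gdot v v * Q B D - lower v B * contr v Q D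
  + g B D * (\sum_C v C * contr v Q C) - lower v D * contr v Q B.
Proof.
move=> /sym_mxE Q_sym B D; under eq_bigr do rewrite contr_wedge mulrBr mulrDr mulrBr.
rewrite sumrB big_split sumrB /=; congr (_ - _ + _ - _);
  [ rewrite /gdot mulr_suml | rewrite /lower mulr_suml
  | rewrite mulr_sumr | rewrite /contr mulr_sumr ];
  by apply: eq_bigr => C _; rewrite ?(Q_sym B C); ring.
Qed.

Lemma reflection_form_sym v : (reflection_form v)^T = reflection_form v.
Proof. by apply/matrixP => A B; rewrite !mxE g_sym; congr (_ - _ * _); rewrite mulrC. Qed.

Section Reflection.
Variable I : 'I_n.+2 -> R.
Hypothesis I_nonnull : gdot I I != 0.

Lemma contr_reflection_form D : contr I (reflection_form I) D = - lower I D.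
Proof.
rewrite /contr; under eq_bigr do rewrite !mxE mulrBr.
have e1 := contr_g I D; rewrite /contr in e1.
have e2 : \sum_A I A * (2 / gdot I I * (lower I A * lower I D)) =
          2 / gdot I I * (gdot I I * lower I D).
  set c := 2 / _; rewrite /gdot mulr_suml mulr_sumr.
  by apply: eq_bigr => A _; ring.
by rewrite sumrB e1 e2; field.
Qed.

Lemma contr_wedge_reflection_form B C D :
  \sum_A I A * wedge g (reflection_form I) A B C D = 0.
Proof. by rewrite contr_wedge !contr_reflection_form !mxE; ring. Qed.
End Reflection.

End IndexCalculus.

Section CharZero.
Variables (R : numFieldType) (n : nat) (g : 'M[R]_n.+2).
Hypotheses (gsym : g^T = g) (g_unit : g \in unitmx) (n_gt0 : (0 < n)%N).

Let n_neq0 : n%:R != 0 :> R. Proof. by rewrite pnatr_eq0 -lt0n. Qed.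

Lemma Jtr_wedge Q : Q^T = Q -> Jtr g (wedge g Q) = gtrace g Q.
Proof.
move=> Q_sym; rewrite /Jtr scal_wedge // mulrA mulVf ?mul1r //.
by rewrite mulf_neq0 ?pnatr_eq0.
Qed.

Lemma schouten_wedge Q : Q^T = Q -> schouten g (wedge g Q) = Q.
Proof.
move=> Q_sym; rewrite /schouten ricci_wedge // Jtr_wedge // addrK.
by rewrite scalerA mulVf ?scale1r.
Qed.

Lemma tracefree_wedge Q : Q^T = Q -> forall A B C D, tracefree g (wedge g Q) A B C D = 0.
Proof. by move=> Q_sym A B C D; rewrite /tracefree schouten_wedge ?subrr. Qed.

Lemma ricci_sym T : is_alg_curv T -> (ricci g T)^T = ricci g T.
Proof.
move=> T_curv; apply/matrixP => A C; rewrite !mxE exchange_big /=.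
apply: eq_bigr => B _; apply: eq_bigr => D _.
by rewrite (ginv_sym gsym D B) (alg_curv_pair_sym _ T_curv) ?pnatr_eq0.
Qed.

Lemma schouten_sym T : is_alg_curv T -> (schouten g T)^T = schouten g T.
Proof.
move=> T_curv; apply/matrixP => A C.
have := sym_mxE (ricci_sym T_curv) C A; rewrite !mxE => ->.
by rewrite (sym_mxE gsym C A).
Qed.

Lemma contr_wedge_eq0_reflection (I : 'I_n.+2 -> R) Q : gdot g I I != 0 -> Q^T = Q ->
  (forall B C D, \sum_A I A * wedge g Q A B C D = 0) ->
  exists c, Q = c *: reflection_form g I.
Proof.
move=> I_nonnull Q_sym IQ0.
pose k := - (gtrace g Q / n%:R).
have contr_Q D : contr I Q D = k * lower g I D.
  have := sum_ginv_contr g I (wedge_alg_curv gsym Q_sym).2.1 D.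
  rewrite big1 => [|B _]; last by rewrite big1 // => C _; rewrite IQ0 mulr0.
  rewrite ricci_wedge // contr_addZ (contr_g gsym) => /eqP; rewrite eq_sym oppr_eq0 addr_eq0.
  by move=> /eqP nq; apply: (mulfI n_neq0); rewrite nq /k; field.
exists (- k); apply/matrixP => B D.
have := contr_contr_wedge gsym I Q_sym B D.
rewrite big1 => [|C _]; last by rewrite IQ0 mulr0.
under [X in _ = _ + g B D * X - _]eq_bigr do rewrite contr_Q mulrCA.
rewrite -mulr_sumr -/(gdot g I I) !contr_Q !mxE => IIQ0.
by apply: (mulfI I_nonnull); rewrite -[LHS]subr0 IIQ0; field.
Qed.

End CharZero.

Theorem lemma4p24 (R : realFieldType) (n : nat) (hn : (0 < n)%N)
  (g : 'M[R]_(n.+2)) (gsym : g^T = g) (gnd : \det g != 0)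
  (I : 'I_(n.+2) -> R) (* I^A *)
  (iota : R) (hiota : iota = \sum_(A < n.+2) \sum_(B < n.+2) g A B * I A * I B)
  (hiota0 : iota != 0) :
  let Ilow : 'I_(n.+2) -> R := fun A => \sum_(B < n.+2) g A B * I B in
  let I2 : 'M[R]_(n.+2) := \matrix_(A, B) (Ilow A * Ilow B) in
  let T := wedge g (g - (2 / iota) *: I2) in
  forall Rt : tensor4 R n.+2,
    (is_alg_curv Rt /\
     (forall A B C D, tracefree g Rt A B C D = 0) /\
     (forall B C D, \sum_(A < n.+2) I A * Rt A B C D = 0))
    <-> exists c : R, forall A B C D, Rt A B C D = c * T A B C D.
Proof.
move=> Ilow I2 T Rt.
have g_unit : g \in unitmx by rewrite unitmxE unitfE.
have iotaE : iota = gdot g I I.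
  by rewrite hiota; apply: eq_bigr => A _; rewrite mulr_sumr; apply: eq_bigr => B _; ring.
have -> : T = wedge g (reflection_form g I) by rewrite /T iotaE.
rewrite iotaE in hiota0; split.
- move=> [Rt_curv [Rt_tracefree Rt_I]].
  have Rt_wedge : Rt = wedge g (schouten g Rt).
    apply: tensor4_ext => A B C D.
    by apply/eqP; rewrite -subr_eq0; apply/eqP; exact: Rt_tracefree.
  rewrite Rt_wedge in Rt_I.
  have [c P_c] :=
    contr_wedge_eq0_reflection gsym g_unit hn hiota0 (schouten_sym gsym Rt_curv) Rt_I.
  by exists c => A B C D; rewrite Rt_wedge P_c wedgeZr.
- move=> [c Rt_c].
  have cK_sym : (c *: reflection_form g I)^T = c *: reflection_form g I.
    by rewrite linearZ /= reflection_form_sym.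
  have -> : Rt = wedge g (c *: reflection_form g I).
    by apply: tensor4_ext => A B C D; rewrite Rt_c wedgeZr.
  split; [exact: wedge_alg_curv | split; first exact: tracefree_wedge].
  move=> B C D; under eq_bigr do rewrite wedgeZr mulrCA.
  by rewrite -mulr_sumr contr_wedge_reflection_form ?mulr0.
Qed.
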